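(* Consider the following two-bidder auction with limit price $L=0$. A single good has common value $v$ with CDF $F_v$, density $f_v$, support $\mathbb{R}_+$ and finite mean. Alice submits a bid knowing only $F_v$; then $v$ is realized and Bob, observing $v$ but not Alice's bid, submits a bid; the highest bid wins and pays its bid, receiving $v$ minus the bid; Bob wins ties. Let $\Pi_B$ be Bob's expected profit in the equilibrium in which Bob bids $\mathbb{E}[\tilde v\mid\tilde v<v]$ and Alice draws $v'\sim F_v$ independently and bids $\mathbb{E}[\tilde v\mid\tilde v<v']$. Then, with $v\sim F_v$, $$\Pi_B\ge \mathbb{E}[\max(v-\mathbb{E}[v],0)]\quad\text{and}\quad \Pi_B\ge \mathbb{E}[\max(\mathbb{E}[v]-v,0)].$$
   Context: Bidders are risk neutral; $\tilde v\sim F_v$. *)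

From HB Require Import structures.
From mathcomp Require Import all_boot all_order all_algebra.
From mathcomp Require Import all_classical all_reals all_analysis.
Set Implicit Arguments. Unset Strict Implicit. Unset Printing Implicit Defensive.
Import Order.TTheory GRing.Theory Num.Theory.
Import numFieldNormedType.Exports.
Local Open Scope classical_set_scope.
Local Open Scope ring_scope.

(* f : R -> R is the density f_v of the common value v (Lebesgue measure). *)

(* CDF  F_v(x) = P(v < x) = int_{(-oo,x)} f  (equal to P(v <= x) since v has a density) *)
Definition cdf (R : realType) (f : R -> R) (x : R) : R :=
  Rintegral (@lebesgue_measure R) `]-oo, x[ f.

(* E[ v~ | v~ < x ] = (int_{(-oo,x)} t f(t) dt) / F_v(x)
   (for x <= 0 the event is null; the value is then 0/0 = 0 by convention,
   which is irrelevant since it has probability zero) *)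
Definition cond_mean_below (R : realType) (f : R -> R) (x : R) : R :=
  Rintegral (@lebesgue_measure R) `]-oo, x[ (fun t => t * f t) / cdf f x.

Definition mean (R : realType) (f : R -> R) : R :=
  Rintegral (@lebesgue_measure R) setT (fun t => t * f t).

(* Bob's expected profit in the stated equilibrium: Bob with value v bids
   b(v) = E[v~ | v~ < v]; Alice draws v' ~ F_v independently and bids b(v');
   Bob wins iff b(v) >= b(v') (Bob wins ties) and then gets v - b(v). *)
Definition bob_profit (R : realType) (f : R -> R) : \bar R :=
  (\int[@lebesgue_measure R]_(v in [set: R])
     \int[@lebesgue_measure R]_(w in [set: R])
       ((v - cond_mean_below f v)
        * ((cond_mean_below f w <= cond_mean_below f v)%R)%:R
        * f v * f w)%:E)%E.

From Pilot Require Import Defs.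
From HB Require Import structures.
From mathcomp Require Import all_boot all_order all_algebra.
From mathcomp Require Import all_classical all_reals all_analysis.
From mathcomp Require Import measurable_realfun ring lra.
Set Implicit Arguments.
Unset Strict Implicit.
Unset Printing Implicit Defensive.
Import Order.TTheory GRing.Theory Num.Theory.
Import numFieldNormedType.Exports.
Local Open Scope classical_set_scope.
Local Open Scope ring_scope.

(* Write F for the CDF, G v = E[v~; v~ < v] and b = G / F for Bob's bid.
   For w <= v, G v - G w >= w (F v - F w) >= b w (F v - F w), so b is
   nondecreasing and Bob with value v wins against every Alice draw w < v:
   his profit given v is at least (v - b v) F v = v F v - G v = E[(v - v~)^+],
   which dominates both 0 and v - E[v~].  The second bound follows from the
   first because E[v - E v~] = 0 makes E[(E v~ - v)^+] = E[(v - E v~)^+]. *)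

Lemma integrableZl_EFin d (T : measurableType d) (R : realType)
    (mu : {measure set T -> \bar R}) (D : set T) (k : R) (g : T -> R) :
  measurable D -> mu.-integrable D (EFin \o g) ->
  mu.-integrable D (EFin \o (fun x => k * g x)).
Proof.
move=> mD /(integrableZl mD k).
by apply: eq_integrable => // x _ /=; rewrite EFinM.
Qed.

(* Unlike [ge0_le_integral], no measurability is required: both integrals are
   suprema over the simple functions below the integrand. *)
Lemma ge0_le_integralT d (T : measurableType d) (R : realType)
    (mu : {measure set T -> \bar R}) (g1 g2 : T -> \bar R) :
  (forall x, 0 <= g1 x)%E -> (forall x, g1 x <= g2 x)%E ->
  (\int[mu]_x g1 x <= \int[mu]_x g2 x)%E.
Proof.
move=> g10 g12; have g20 x : (0 <= g2 x)%E := le_trans (g10 x) (g12 x).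
rewrite !ge0_integralTE //; apply: ereal_sup_le => _ [h /= hg1 <-].
by exists h => //= x; exact: le_trans (hg1 x) (g12 x).
Qed.

Section Rintegral_line.
Context {R : realType} (mu : {measure set (measurableTypeR R) -> \bar R}).

Lemma Rintegral_itvNy_split (g : R -> R) (w : R) (b : itv_bound R) :
    (BLeft w <= b)%O -> mu.-integrable [set` Interval -oo%O b] (EFin \o g) ->
  \int[mu]_(t in [set` Interval -oo%O b]) g t =
  \int[mu]_(t in `]-oo, w[) g t +
  \int[mu]_(t in [set` Interval (BLeft w) b]) g t.
Proof.
move=> wb; rewrite (@itv_bndbnd_setU _ _ _ (BLeft w)) // => ig.
apply: Rintegral_setU => //; apply/disj_setPS => t [/=].
by rewrite !in_itv /= => tw /andP[wt _]; move: tw; rewrite ltNge wt.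
Qed.

Variables (D : set R) (f : R -> R).
Hypotheses (mD : measurable (D : set (measurableTypeR R)))
  (f_ge0 : forall t, D t -> 0 <= f t)
  (f_int : mu.-integrable D (EFin \o f))
  (tf_int : mu.-integrable D (fun t => (t * f t)%:E)).

Lemma Rintegral_id_mul_ge a : (forall t, D t -> a <= t) ->
  a * (\int[mu]_(t in D) f t) <= \int[mu]_(t in D) (t * f t).
Proof.
move=> aD; rewrite -RintegralZl //.
apply: le_Rintegral => //; first exact: integrableZl_EFin.
by move=> t Dt; rewrite ler_wpM2r ?f_ge0 ?aD.
Qed.

Lemma Rintegral_id_mul_le a : (forall t, D t -> t <= a) ->
  \int[mu]_(t in D) (t * f t) <= a * (\int[mu]_(t in D) f t).
Proof.
move=> Da; rewrite -RintegralZl //.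
apply: le_Rintegral => //; first exact: integrableZl_EFin.
by move=> t Dt; rewrite ler_wpM2r ?f_ge0 ?Da.
Qed.

End Rintegral_line.

Section excess_shortfall.
Context {R : realType} (mu : {measure set (measurableTypeR R) -> \bar R})
  (f : R -> R).
Hypotheses (f_ge0 : forall x, 0 <= f x)
  (f_int : mu.-integrable setT (EFin \o f))
  (tf_int : mu.-integrable setT (fun x => (x * f x)%:E)).

Lemma integrable_max_sub_mul c :
  mu.-integrable setT (EFin \o (fun x => Num.max (x - c) 0 * f x)).
Proof.
have f_meas : measurable_fun setT f.
  by apply/measurable_EFinP; exact: measurable_int f_int.
have bound_int :
    mu.-integrable setT (EFin \o (fun x => `|x * f x| + `|c| * f x)).
  have := integrableD measurableT (integrable_norm tf_int)
    (integrableZl_EFin `|c| measurableT f_int).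
  by apply: eq_integrable => // x _ /=; rewrite EFinD.
apply: le_integrable bound_int => //.
  apply/measurable_EFinP; apply: measurable_funM => //.
  by apply: measurable_maxr => //; exact: measurable_funB.
move=> x _; have excess_ge0 : 0 <= Num.max (x - c) 0 * f x.
  by rewrite mulr_ge0 // le_max lexx orbT.
rewrite /= lee_fin (ger0_norm excess_ge0) ger0_norm ?addr_ge0 ?mulr_ge0 //.
rewrite normrM (ger0_norm (f_ge0 x)) -mulrDl ler_wpM2r //.
rewrite ge_max addr_ge0 // andbT.
exact: le_trans (ler_norm _) (ler_normB _ _).
Qed.

Lemma integral_max_mean_subC : \int[mu]_x f x = 1 ->
  (\int[mu]_x (Num.max (\int[mu]_t (t * f t) - x) 0 * f x)%:E =
   \int[mu]_x (Num.max (x - \int[mu]_t (t * f t)) 0 * f x)%:E)%E.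
Proof.
set m := \int[mu]_t (t * f t) => f1.
have mf_int := integrableZl_EFin m measurableT f_int.
have dev_int : mu.-integrable setT (EFin \o (fun x => x * f x - m * f x)).
  have := integrableB measurableT tf_int mf_int.
  by apply: eq_integrable => // x _ /=; rewrite EFinB.
have excess_int := integrable_max_sub_mul m.
have shortfallE x : Num.max (m - x) 0 * f x =
    Num.max (x - m) 0 * f x - (x * f x - m * f x).
  have [xm|mx] := leP x m.
    by rewrite (max_idPl _) ?subr_ge0 // (max_idPr _) ?subr_le0 //; ring.
  rewrite (max_idPr _) ?subr_le0 ?ltW // (max_idPl _) ?subr_ge0 ?ltW //.
  ring.
have shortfall_int : mu.-integrable setT
    (EFin \o (fun x => Num.max (m - x) 0 * f x)).
  have := integrableB measurableT excess_int dev_int.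
  by apply: eq_integrable => // x _ /=; rewrite shortfallE EFinB.
rewrite -[LHS]fineK ?integrable_fin_num // -[RHS]fineK ?integrable_fin_num //.
congr EFin; rewrite -!/(Rintegral _ _ _).
under eq_Rintegral do rewrite shortfallE.
rewrite RintegralB // RintegralB // RintegralZl // f1 -/m; ring.
Qed.

End excess_shortfall.

Definition partial_mean_below {R : realType} (f : R -> R) (v : R) : R :=
  \int[@lebesgue_measure R]_(t in `]-oo, v[) (t * f t).

Section cond_mean_below.
Context {R : realType} (f : R -> R).
Local Notation mu := (@lebesgue_measure R).
Local Notation F := (Defs.cdf f).
Local Notation G := (partial_mean_below f).
Local Notation b := (cond_mean_below f).
Hypotheses (f_ge0 : forall x, 0 <= f x) (f_neg : forall x, x < 0 -> f x = 0)
  (f_int : mu.-integrable setT (EFin \o f))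
  (tf_int : mu.-integrable setT (fun x => (x * f x)%:E))
  (f1 : \int[mu]_x f x = 1).

Let f_int_itv (i : interval R) : mu.-integrable [set` i] (EFin \o f).
Proof. exact: integrableS f_int. Qed.

Let tf_int_itv (i : interval R) :
  mu.-integrable [set` i] (fun x => (x * f x)%:E).
Proof. exact: integrableS tf_int. Qed.

Lemma cdf_ge0 v : 0 <= F v.
Proof. by apply: Rintegral_ge0 => t _; exact: f_ge0. Qed.

Lemma partial_mean_below_ge0 v : 0 <= G v.
Proof.
apply: Rintegral_ge0 => t _; have [t_lt0|t_ge0] := ltP t 0.
  by rewrite f_neg // mulr0.
exact: mulr_ge0.
Qed.

Lemma partial_mean_below_le v : G v <= v * F v.
Proof.
apply: Rintegral_id_mul_le => // t; rewrite /= in_itv /=; exact: ltW.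
Qed.

Lemma partial_mean_below_incr w v : w <= v -> w * (F v - F w) <= G v - G w.
Proof.
move=> wv; rewrite /Defs.cdf /partial_mean_below.
rewrite !(@Rintegral_itvNy_split _ _ _ w (BLeft v)) ?bnd_simp //.
rewrite ![_ + _ - _]addrAC !subrr !add0r.
by apply: Rintegral_id_mul_ge => // t; rewrite /= in_itv /= => /andP[].
Qed.

Lemma cdf_nondecreasing : {homo F : w v / w <= v}.
Proof.
move=> w v wv; rewrite /Defs.cdf.
rewrite (@Rintegral_itvNy_split _ _ _ w (BLeft v)) ?bnd_simp //.
by rewrite lerDl; apply: Rintegral_ge0 => t _; exact: f_ge0.
Qed.

Lemma mean_sub_partial_mean_below_ge v : v * (1 - F v) <= mean f - G v.
Proof.
move: f1; rewrite /mean /Defs.cdf /partial_mean_below -set_itvNyy.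
rewrite !(@Rintegral_itvNy_split _ _ _ v +oo%O) // => <-.
rewrite ![_ + _ - _]addrAC !subrr !add0r.
by apply: Rintegral_id_mul_ge => // t; rewrite /= in_itv /= andbT.
Qed.

Lemma cond_mean_below_nondecreasing : {homo b : w v / w <= v}.
Proof.
move=> w v wv; rewrite /cond_mean_below -!/(G _).
have [Fw0|Fw_neq0] := eqVneq (F w) 0.
  by rewrite Fw0 invr0 mulr0 divr_ge0 ?partial_mean_below_ge0 ?cdf_ge0.
have Fw_gt0 : 0 < F w by rewrite lt_def Fw_neq0 cdf_ge0.
have Fv_gt0 : 0 < F v := lt_le_trans Fw_gt0 (cdf_nondecreasing wv).
have bw_le : G w / F w <= w by rewrite ler_pdivrMr // partial_mean_below_le.
have dF_ge0 : 0 <= F v - F w by rewrite subr_ge0 cdf_nondecreasing.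
have := ler_wpM2r dF_ge0 bw_le; rewrite mulrBr divfK // => bw_dF.
have := partial_mean_below_incr wv; rewrite ler_pdivlMr //; lra.
Qed.

Lemma cond_mean_below_mulr_cdf v : (v - b v) * F v = v * F v - G v.
Proof.
have [Fv0|Fv_neq0] := eqVneq (F v) 0; last by rewrite mulrBl divfK.
have Gv0 : G v = 0.
  apply/eqP; rewrite eq_le partial_mean_below_ge0.
  by rewrite -[0](mulr0 v) -Fv0 partial_mean_below_le.
by rewrite Fv0 Gv0 !mulr0 subr0.
Qed.

(* If [F v = 0] then [b v] is the junk value [0], and [f_neg] is what makes
   [v * f v] nonnegative. *)
Lemma cond_mean_below_margin_ge0 v : 0 <= (v - b v) * f v.
Proof.
have [Fv0|Fv_neq0] := eqVneq (F v) 0.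
  rewrite /cond_mean_below Fv0 invr0 mulr0 subr0.
  by have [v_lt0|v_ge0] := ltP v 0; [rewrite f_neg // mulr0 | exact: mulr_ge0].
have Fv_gt0 : 0 < F v by rewrite lt_def Fv_neq0 cdf_ge0.
rewrite mulr_ge0 // subr_ge0 /cond_mean_below ler_pdivrMr //.
exact: partial_mean_below_le.
Qed.

Lemma max_sub_mean_le v : Num.max (v - mean f) 0 <= v * F v - G v.
Proof.
rewrite ge_max subr_ge0 partial_mean_below_le andbT.
have := mean_sub_partial_mean_below_ge v; lra.
Qed.

Lemma bob_profit_at_ge v :
  (((v * F v - G v) * f v)%:E <=
   \int[mu]_(w in [set: R])
     ((v - b v) * ((b w <= b v)%R)%:R * f v * f w)%:E)%E.
Proof.
set c := (v - b v) * f v.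
have c_ge0 : 0 <= c := cond_mean_below_margin_ge0 v.
have f_below_int : mu.-integrable setT (EFin \o (f \_ `]-oo, v[)).
  have mD : measurable (`]-oo, v[ : set (measurableTypeR R)).
    exact: measurable_itv.
  have := (@integrable_mkcond _ _ _ mu _ (EFin \o f) mD).1 (f_int_itv _).
  by apply: eq_integrable => // w _ /=; rewrite restrict_EFin.
have cf_int := integrableZl_EFin c measurableT f_below_int.
have -> : ((v * F v - G v) * f v)%:E =
    (\int[mu]_w (c * (f \_ `]-oo, v[) w)%:E)%E.
  rewrite -cond_mean_below_mulr_cdf mulrAC -/c /Defs.cdf Rintegral_mkcond.
  by rewrite -RintegralZl //; apply: fineK; exact: integrable_fin_num.
apply: ge0_le_integralT => w; rewrite lee_fin patchE mem_setE in_itv /=.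
  by case: ifP => _; rewrite mulr_ge0.
case: ifPn => [wv|_].
  by rewrite (cond_mean_below_nondecreasing (ltW wv)) mulr1n mulr1 mulrAC.
rewrite -[point]/(0 : R) mulr0 [_ * _ * f v]mulrAC -/c.
by apply: mulr_ge0 => //; exact: mulr_ge0.
Qed.

End cond_mean_below.

Theorem corollary2 (R : realType) (f : R -> R)
  (f_meas : measurable_fun setT f)
  (f_ge0 : forall x, 0 <= f x)
  (f_neg : forall x, x < 0 -> f x = 0)
  (f_total : (\int[@lebesgue_measure R]_(x in setT) (f x)%:E = 1)%E)
  (f_supp : forall a b : R, 0 <= a -> a < b ->
     (0 < \int[@lebesgue_measure R]_(x in `[a, b]) (f x)%:E)%E)
  (f_mean : (@lebesgue_measure R).-integrable setT (fun x => (x * f x)%:E)) :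
  (\int[@lebesgue_measure R]_(x in setT) (Num.max (x - mean f) 0 * f x)%:E
     <= bob_profit f)%E /\
  (\int[@lebesgue_measure R]_(x in setT) (Num.max (mean f - x) 0 * f x)%:E
     <= bob_profit f)%E.
Proof.
have f_int : (@lebesgue_measure R).-integrable setT (EFin \o f).
  apply/integrableP; split; first exact/measurable_EFinP.
  under eq_integral => x _ do rewrite /= ger0_norm //.
  by rewrite f_total ltry.
have f1 : \int[@lebesgue_measure R]_x f x = 1 by rewrite /Rintegral f_total.
have excess_le : (\int[@lebesgue_measure R]_(x in setT)
    (Num.max (x - mean f) 0 * f x)%:E <= bob_profit f)%E.
  apply: ge0_le_integralT => v.
    by rewrite lee_fin mulr_ge0 // le_max lexx orbT.
  apply: le_trans _ (bob_profit_at_ge f_ge0 f_neg f_int f_mean v).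
  by rewrite lee_fin ler_wpM2r // max_sub_mean_le.
split => //.
by rewrite (integral_max_mean_subC f_ge0 f_int f_mean f1).
Qed.
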